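(* Let $q$ be a prime power, $n\ge k\ge0$ integers, $V_1,\dots,V_\ell$ subspaces of $\mathbb{F}_q^n$ each of dimension at most $k$, and $\delta_1,\dots,\delta_\ell\ge0$ integers. The following are equivalent: (i) for every nonempty $\Omega\subseteq[\ell]$, $\dim\big(\bigcap_{i\in\Omega}V_i\big)\le k-\sum_{i\in\Omega}\delta_i$; (ii) $\sum_{i=1}^\ell\delta_i\le k$ and the $k$-tuple $(T_1,\dots,T_k)$ consisting of $\delta_i$ copies of $V_i$ for each $i\in[\ell]$ together with $k-\sum_{i=1}^\ell\delta_i$ additional copies of $\{0\}$ is a generic kernel pattern, i.e. $\dim\big(\bigcap_{i\in\Omega'}T_i\big)\le k-|\Omega'|$ for every nonempty $\Omega'\subseteq[k]$.
   Context: The copies are counted as distinct entries of the tuple: the set of positions holding copies of $V_i$ is disjoint from the positions holding copies of any other $V_{i'}$ (even if $V_i=V_{i'}$) and from the positions of the additional copies of $\{0\}$ (even if $V_i=\{0\}$). *)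

From HB Require Import structures.
From mathcomp Require Import all_boot all_order all_algebra all_field.
Set Implicit Arguments. Unset Strict Implicit. Unset Printing Implicit Defensive.
Import GRing.Theory Num.Theory.

(* Positions are
   indexed by 'I_k; when sum_i delta_i <= k the underlying sequence has size
   exactly k. *)
Definition kernel_tuple (F : fieldType) (n k l : nat)
    (V : 'I_l -> {vspace 'rV[F]_n}) (delta : 'I_l -> nat) : 'I_k -> {vspace 'rV[F]_n} :=
  fun j => nth 0%VS
    (flatten [seq nseq (delta i) (V i) | i <- enum 'I_l]
       ++ nseq (k - \sum_(i < l) delta i) 0%VS) j.

Definition generic_kernel_pattern (F : fieldType) (n k : nat)
    (T : 'I_k -> {vspace 'rV[F]_n}) : Prop :=
  forall Om : {set 'I_k}, Om != set0 ->
    (\dim (\bigcap_(i in Om) T i)%VS <= k - #|Om|)%N.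

From HB Require Import structures.
From mathcomp Require Import all_boot all_order all_algebra all_field.
Import GRing.Theory Num.Theory.
Set Implicit Arguments. Unset Strict Implicit.

(* Position j of the k-tuple is owned by the index i whose copy of V_i it
   holds, or by nobody if it holds {0}.  For positions Om', the intersection of
   the T_j is {0} if some position of Om' is unowned, and otherwise is contained
   in the intersection of the V_i over the owners Om of Om', where
   #|Om'| <= sum_(i in Om) delta_i.  Conversely, for Om the set Om' of all
   positions owned by Om has #|Om'| = sum_(i in Om) delta_i and its intersection
   contains that of the V_i.  So each bound of one family follows from a bound
   of the other. *)

Section Owners.

Variables (k l : nat) (delta : 'I_l -> nat).

Definition kernel_owners : seq (option 'I_l) :=
  flatten [seq nseq (delta i) (Some i) | i <- enum 'I_l]
    ++ nseq (k - \sum_(i < l) delta i) None.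

Definition owner (j : 'I_k) : option 'I_l := nth None kernel_owners j.

Lemma count_kernel_owners (P : pred (option 'I_l)) :
  count P kernel_owners =
  \sum_(i < l) P (Some i) * delta i + P None * (k - \sum_(i < l) delta i).
Proof.
rewrite count_cat count_flatten count_nseq sumnE !big_map -enumT big_enum /=.
by congr (_ + _); apply: eq_bigr => i _; rewrite count_nseq.
Qed.

Lemma size_kernel_owners : size kernel_owners = maxn (\sum_(i < l) delta i) k.
Proof.
rewrite -count_predT count_kernel_owners maxnE /=.
by under eq_bigr do rewrite mul1n; rewrite mul1n.
Qed.

Definition owned_by (Om : {set 'I_l}) (o : option 'I_l) : bool :=
  if o is Some i then i \in Om else false.

Definition owned (Om : {set 'I_l}) : {set 'I_k} := [set j | owned_by Om (owner j)].

Definition owners_of (Om' : {set 'I_k}) : {set 'I_l} :=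
  [set i | Some i \in owner @: Om'].

Lemma owners_of_eq0 (Om' : {set 'I_k}) :
  None \notin owner @: Om' -> (owners_of Om' == set0) = (Om' == set0).
Proof.
move=> noNone; apply/idP/idP => [/eqP ownE | /eqP ->]; last first.
  by apply/eqP/setP => i; rewrite !inE imset0 inE.
apply/negPn/negP => /set0Pn [j jOm'].
case ownj : (owner j) => [i|]; last by rewrite -ownj imset_f in noNone.
have : i \in owners_of Om' by rewrite inE -ownj imset_f.
by rewrite ownE inE.
Qed.

Lemma sub_owned_owners_of (Om' : {set 'I_k}) :
  None \notin owner @: Om' -> Om' \subset owned (owners_of Om').
Proof.
move=> noNone; apply/subsetP => j jOm'; rewrite inE.
case ownj : (owner j) => [i|]; last by rewrite -ownj imset_f in noNone.
by rewrite /= inE -ownj imset_f.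
Qed.

Hypothesis delta_sum_le : \sum_(i < l) delta i <= k.

Lemma card_owned (Om : {set 'I_l}) : #|owned Om| = \sum_(i in Om) delta i.
Proof.
have sizeE : size kernel_owners = k by rewrite size_kernel_owners (maxn_idPr _).
have -> : \sum_(i in Om) delta i = count (owned_by Om) kernel_owners.
  rewrite count_kernel_owners /= mul0n addn0 [LHS]big_mkcond /=.
  by apply: eq_bigr => i _; case: (i \in Om); rewrite ?mul1n ?mul0n.
rewrite -sum1_card -sum1_count (big_nth None) sizeE big_mkord.
by apply: eq_bigl => j; rewrite inE.
Qed.

End Owners.

Section KernelTuple.

Variables (F : fieldType) (n k l : nat).
Variables (V : 'I_l -> {vspace 'rV[F]_n}) (delta : 'I_l -> nat).

Local Notation T := (@kernel_tuple F n k l V delta).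
Local Notation owner := (@owner k l delta).

Definition owner_space (o : option 'I_l) : {vspace 'rV[F]_n} :=
  if o is Some i then V i else 0%VS.

Lemma kernel_tupleE j : T j = owner_space (owner j).
Proof.
rewrite /kernel_tuple.
have -> : flatten [seq nseq (delta i) (V i) | i <- enum 'I_l]
       ++ nseq (k - \sum_(i < l) delta i) 0%VS = map owner_space (kernel_owners k delta).
  rewrite map_cat map_nseq map_flatten -map_comp; congr (flatten _ ++ _).
  by apply: eq_map => i /=; rewrite map_nseq.
by rewrite /owner (nth_map None) // size_kernel_owners leq_max ltn_ord orbT.
Qed.

Lemma bigcap_kernel_tuple_eq0 (Om' : {set 'I_k}) :
  None \in owner @: Om' -> (\bigcap_(j in Om') T j)%VS = 0%VS.
Proof.
case/imsetP=> j jOm' ownj; apply/eqP; rewrite -subv0.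
by apply: (bigcapv_inf j jOm'); rewrite kernel_tupleE -ownj.
Qed.

Lemma bigcap_kernel_tuple_sub (Om' : {set 'I_k}) :
  (\bigcap_(j in Om') T j <= \bigcap_(i in owners_of delta Om') V i)%VS.
Proof.
apply/subv_bigcapP => i; rewrite inE => /imsetP [j jOm' ownj].
by apply: (bigcapv_inf j jOm'); rewrite kernel_tupleE -ownj.
Qed.

Lemma bigcap_sub_kernel_tuple (Om : {set 'I_l}) :
  (\bigcap_(i in Om) V i <= \bigcap_(j in owned k delta Om) T j)%VS.
Proof.
apply/subv_bigcapP => j; rewrite inE kernel_tupleE.
by case: (owner j) => [i iOm|] //=; apply: (bigcapv_inf i iOm).
Qed.

Hypothesis delta_sum_le : \sum_(i < l) delta i <= k.

Lemma kernel_pattern_of_dim_bound :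
  (forall Om : {set 'I_l}, Om != set0 ->
     \dim (\bigcap_(i in Om) V i) + \sum_(i in Om) delta i <= k) ->
  generic_kernel_pattern T.
Proof.
move=> dim_bound Om' Om'_n0.
have [/bigcap_kernel_tuple_eq0 -> | noNone] := boolP (None \in owner @: Om').
  by rewrite dimv0.
set Om := owners_of delta Om'.
have card_le : #|Om'| <= \sum_(i in Om) delta i.
  by rewrite -(card_owned delta_sum_le); apply/subset_leq_card/sub_owned_owners_of.
have dim_le := dimvS (bigcap_kernel_tuple_sub Om').
have := dim_bound Om; rewrite owners_of_eq0 // => /(_ Om'_n0) bound.
rewrite leq_subRL; last by rewrite -[k in _ <= k]card_ord max_card.
by rewrite (leq_trans _ bound) // addnC leq_add.
Qed.

Lemma dim_bound_of_kernel_pattern (Om : {set 'I_l}) :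
  (forall i, \dim (V i) <= k) -> generic_kernel_pattern T -> Om != set0 ->
  \dim (\bigcap_(i in Om) V i) + \sum_(i in Om) delta i <= k.
Proof.
move=> dimV_le pattern /set0Pn [i0 i0Om].
have [-> | sum_gt0] := posnP (\sum_(i in Om) delta i).
  by rewrite addn0 (leq_trans (dimvS (bigcapv_inf _ i0Om (subvv _)))).
set Om' := owned k delta Om.
have cardE : #|Om'| = \sum_(i in Om) delta i := card_owned delta_sum_le Om.
have card_le : #|Om'| <= k by rewrite -[k in _ <= k]card_ord max_card.
have dim_le := dimvS (bigcap_sub_kernel_tuple Om).
have := pattern Om'; rewrite -card_gt0 leq_subRL // cardE => /(_ sum_gt0).
by apply: leq_trans; rewrite addnC leq_add2l.
Qed.

End KernelTuple.

Lemma sum_le_of_dim_bound (F : fieldType) (n k l : nat)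
    (V : 'I_l -> {vspace 'rV[F]_n}) (delta : 'I_l -> nat) :
  (forall Om : {set 'I_l}, Om != set0 ->
     \dim (\bigcap_(i in Om) V i) + \sum_(i in Om) delta i <= k) ->
  \sum_(i < l) delta i <= k.
Proof.
case: l V delta => [|l] V delta dim_bound; first by rewrite big_ord0.
have := dim_bound setT; rewrite -card_gt0 cardsT card_ord => /(_ isT).
by move=> /(leq_trans (leq_addl _ _)); under eq_bigl do rewrite inE.
Qed.

Lemma lez_natBrDr (a b c : nat) : (a%:Z <= b%:Z - c%:Z)%R = (a + c <= b).
Proof. by rewrite lerBrDr -PoszD lez_nat. Qed.

Theorem mainTheorem13 (F : finFieldType) (n k l : nat) (hkn : (k <= n)%N)
    (V : 'I_l -> {vspace 'rV[F]_n}) (hV : forall i, (\dim (V i) <= k)%N)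
    (delta : 'I_l -> nat) :
  (forall Om : {set 'I_l}, Om != set0 ->
     ((\dim (\bigcap_(i in Om) V i)%VS)%:Z <= k%:Z - (\sum_(i in Om) delta i)%:Z)%R)
  <->
  ((\sum_(i < l) delta i <= k)%N /\
   @generic_kernel_pattern F n k (@kernel_tuple F n k l V delta)).
Proof.
split => [dim_bound | [sum_le pattern] Om Om_n0].
- have {}dim_bound Om : Om != set0 ->
      \dim (\bigcap_(i in Om) V i) + \sum_(i in Om) delta i <= k.
    by move=> /dim_bound; rewrite lez_natBrDr.
  have sum_le := sum_le_of_dim_bound dim_bound.
  by split; last exact: kernel_pattern_of_dim_bound.
- by rewrite lez_natBrDr; apply: dim_bound_of_kernel_pattern.
Qed.
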